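(* Let $(A,\Delta,\Delta')$ be a commutative Hopf brace over a field $k$, with antipodes $S$ (for $\Delta$) and $T$ (for $\Delta'$), and write $A_{\Delta'}$ for the Hopf algebra $(A,m,1,\Delta',\epsilon,T)$. Then: (1) $A$ is a left $A_{\Delta'}$-comodule algebra via $\rho(a)=a_{(-1)}\otimes a_{(0)}:=S(a_1)a_{21'}\otimes a_{22'}$; (2) $A$ is a right $A_{\Delta'}$-comodule algebra via $$\varphi(a)=a_{[0]}\otimes a_{[1]}:=T(a_{1'})_{(-1)}a_{2'}\otimes T(a_{1'})_{(0)}a_{3'}=S(T(a_{1'})_1)\,T(a_{1'})_{21'}\,a_{2'}\otimes T(a_{1'})_{22'}\,a_{3'};$$ (3) $(\mathrm{id}\otimes S)\rho(a)=\rho(S(a))$ for all $a\in A$, i.e. $a_{(-1)}\otimes S(a_{(0)})=S(a)_{(-1)}\otimes S(a)_{(0)}$.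
   Context: All objects are over a field $k$. A Hopf brace $(A,\Delta,\Delta')$ consists of an algebra $(A,m,1)$ with two Hopf algebra structures $(A,m,1,\Delta,\varepsilon,S)$ and $(A,m,1,\Delta',\epsilon,T)$ on the same algebra such that for all $h\in A$: $h_{1'}\otimes h_{2'1}\otimes h_{2'2}=h_{11'}S(h_2)h_{31'}\otimes h_{12'}\otimes h_{32'}$. It is commutative if the algebra $A$ is commutative. Sweedler notation: $\Delta(h)=h_1\otimes h_2$, $\Delta'(h)=h_{1'}\otimes h_{2'}$, iterated $\Delta'$ written $h_{1'}\otimes h_{2'}\otimes h_{3'}$; mixed indices like $h_{21'}$ mean $\Delta'$ applied to $h_2$. A left (resp. right) comodule algebra is a comodule whose coaction is an algebra map. *)

(* Tensor products over a field k are encoded by formal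
   finite sums of elementary tensors (seq of pairs/triples), two formal sums
   being identified exactly when they agree under every (bi/tri)linear map
   into every k-vector space: this is the universal property defining
   A (x) A, resp. A (x) A (x) A. *)
From HB Require Import structures.
From mathcomp Require Import all_boot all_order all_algebra.
Set Implicit Arguments.
Unset Strict Implicit.
Unset Printing Implicit Defensive.
Import GRing.Theory.
Local Open Scope ring_scope.

Section Tensors.
Variables (k : fieldType) (A : algType k).

Definition tens2 := seq (A * A).
Definition tens3 := seq (A * A * A).

Definition bilinear_map (W : lmodType k) (b : A -> A -> W) : Prop :=
  (forall c (x : k) y1 y2, b (x *: y1 + y2) c = x *: b y1 c + b y2 c) /\
  (forall c (x : k) y1 y2, b c (x *: y1 + y2) = x *: b c y1 + b c y2).

Definition trilinear_map (W : lmodType k) (t : A -> A -> A -> W) : Prop :=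
  [/\ (forall c d (x : k) y1 y2, t (x *: y1 + y2) c d = x *: t y1 c d + t y2 c d),
      (forall c d (x : k) y1 y2, t c (x *: y1 + y2) d = x *: t c y1 d + t c y2 d)
    & (forall c d (x : k) y1 y2, t c d (x *: y1 + y2) = x *: t c d y1 + t c d y2)].

Definition teq2 (s t : tens2) : Prop :=
  forall (W : lmodType k) (b : A -> A -> W), bilinear_map b ->
    \sum_(p <- s) b p.1 p.2 = \sum_(p <- t) b p.1 p.2.

Definition teq3 (s t : tens3) : Prop :=
  forall (W : lmodType k) (b : A -> A -> A -> W), trilinear_map b ->
    \sum_(p <- s) b p.1.1 p.1.2 p.2 = \sum_(p <- t) b p.1.1 p.1.2 p.2.

Definition tscale (x : k) (s : tens2) : tens2 := [seq (x *: p.1, p.2) | p <- s].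
Definition tmul (s t : tens2) : tens2 :=
  [seq (p.1 * q.1, p.2 * q.2) | p <- s, q <- t].
Definition tmap (f g : A -> A) (s : tens2) : tens2 := [seq (f p.1, g p.2) | p <- s].

Definition tlinear (F : A -> tens2) : Prop :=
  forall (x : k) a b, teq2 (F (x *: a + b)) (tscale x (F a) ++ F b).

Definition compL (F : A -> tens2) (s : tens2) : tens3 :=
  flatten [seq [seq (q.1, q.2, p.2) | q <- F p.1] | p <- s].
Definition compR (F : A -> tens2) (s : tens2) : tens3 :=
  flatten [seq [seq (p.1, q.1, q.2) | q <- F p.2] | p <- s].

Record hopf_data := HopfData {
  cop : A -> tens2;
  cou : A -> k;
  ant : A -> A }.

Record is_hopf (H : hopf_data) : Prop := {
  cop_linear : tlinear (cop H);
  cou_linear : forall (x : k) a b, cou H (x *: a + b) = x * cou H a + cou H b;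
  ant_linear : forall (x : k) a b, ant H (x *: a + b) = x *: ant H a + ant H b;
  coassoc : forall h, teq3 (compL (cop H) (cop H h)) (compR (cop H) (cop H h));
  counitL : forall h, \sum_(p <- cop H h) cou H p.1 *: p.2 = h;
  counitR : forall h, \sum_(p <- cop H h) cou H p.2 *: p.1 = h;
  cop_mul : forall a b, teq2 (cop H (a * b)) (tmul (cop H a) (cop H b));
  cop_one : teq2 (cop H 1) [:: (1, 1)];
  cou_mul : forall a b, cou H (a * b) = cou H a * cou H b;
  cou_one : cou H 1 = 1;
  antipodeL : forall h, \sum_(p <- cop H h) ant H p.1 * p.2 = cou H h *: 1;
  antipodeR : forall h, \sum_(p <- cop H h) p.1 * ant H p.2 = cou H h *: 1 }.

Definition delta3 (D : A -> tens2) (h : A) : tens3 := compL D (D h).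

(* Hopf brace (A, Delta, Delta'): H = (Delta, eps, S), H' = (Delta', eps', T) *)
Definition brace_compat (H H' : hopf_data) : Prop :=
  forall h,
    teq3 (compR (cop H) (cop H' h))
         (flatten [seq [seq (u.1 * ant H t.1.2 * v.1, u.2, v.2)
                           | u <- cop H' t.1.1, v <- cop H' t.2]
                  | t <- delta3 (cop H) h]).

Record hopf_brace (H H' : hopf_data) : Prop := {
  hb_hopf : is_hopf H;
  hb_hopf' : is_hopf H';
  hb_compat : brace_compat H H' }.

Definition left_comodule_algebra (H : hopf_data) (rho : A -> tens2) : Prop :=
  [/\ tlinear rho,
      (forall a, teq3 (compL (cop H) (rho a)) (compR rho (rho a))),
      (forall a, \sum_(p <- rho a) cou H p.1 *: p.2 = a),
      (forall a b, teq2 (rho (a * b)) (tmul (rho a) (rho b)))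
    & teq2 (rho 1) [:: (1, 1)]].

Definition right_comodule_algebra (H : hopf_data) (phi : A -> tens2) : Prop :=
  [/\ tlinear phi,
      (forall a, teq3 (compL phi (phi a)) (compR (cop H) (phi a))),
      (forall a, \sum_(p <- phi a) cou H p.2 *: p.1 = a),
      (forall a b, teq2 (phi (a * b)) (tmul (phi a) (phi b)))
    & teq2 (phi 1) [:: (1, 1)]].

Definition brace_rho (H H' : hopf_data) (a : A) : tens2 :=
  flatten [seq [seq (ant H p.1 * q.1, q.2) | q <- cop H' p.2] | p <- cop H a].

Definition brace_phi (H H' : hopf_data) (a : A) : tens2 :=
  flatten [seq [seq (r.1 * t.1.2, r.2 * t.2) | r <- brace_rho H H' (ant H' t.1.1)]
          | t <- delta3 (cop H') a].

End Tensors.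

(* All identities are proved on Sweedler sums: an equality of tensors is
   tested against an arbitrary multilinear map, so every Hopf and brace axiom
   becomes a rewrite rule for iterated sums.  Commutativity of A makes both
   antipodes algebra maps and involutions.  The brace compatibility gives
   eps = eps', Delta'(S h) = S(h_1) h_(21') S(h_3) (x) S(h_(22')) and
   Delta'(w) = (w_1 (x) 1) rho(w_2).  Then rho is multiplicative because Delta, Delta'
   and S are, its coassociativity is a rewriting of the compatibility, and
   (id (x) S) rho = rho S follows from the formula for Delta'(S h).  For
   phi(a) = T(a_1')_(-1) a_2' (x) T(a_1')_(0) a_3' multiplicativity is
   inherited from rho and T, and coassociativity reduces, via
   Delta'(w) = (w_1 (x) 1) rho(w_2), to the coassociativity of rho. *)

From HB Require Import structures.
From mathcomp Require Import all_boot all_order all_algebra.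
From mathcomp Require Import ring.
Import GRing.Theory.
Local Open Scope ring_scope.

Set Implicit Arguments.
Unset Strict Implicit.
Unset Printing Implicit Defensive.

Section LinearMaps.
Variables (k : fieldType) (A : comAlgType k).

(* The library's [linear f], with a head symbol that [lin_tac] can match. *)
Definition is_linear (W : lmodType k) (f : A -> W) := linear f.

Section Basic.
Variables (W : lmodType k) (f : A -> W) (hf : is_linear f).

Lemma is_linear0 : f 0 = 0.
Proof.
have f00 := hf 1 0 0; rewrite !scale1r addr0 in f00.
by apply: (@addrI _ (f 0)); rewrite addr0 -f00.
Qed.

Lemma is_linearD y z : f (y + z) = f y + f z.
Proof. by have := hf 1 y z; rewrite !scale1r. Qed.

Lemma is_linearZ x y : f (x *: y) = x *: f y.
Proof. by rewrite -[x *: y]addr0 hf is_linear0 addr0. Qed.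

Lemma is_linear_sum I (s : seq I) (F : I -> A) :
  f (\sum_(i <- s) F i) = \sum_(i <- s) f (F i).
Proof.
by elim: s => [|i s IH]; rewrite ?big_nil ?is_linear0 // !big_cons is_linearD IH.
Qed.

End Basic.

Lemma is_linear_id : is_linear (fun u : A => u).
Proof. by []. Qed.

Lemma is_linear_comp (W : lmodType k) (g : A -> W) (f : A -> A) :
  is_linear g -> is_linear f -> is_linear (fun u => g (f u)).
Proof. by move=> hg hf x y z; rewrite hf hg. Qed.

Lemma is_linear_mull (c : A) (f : A -> A) : is_linear f -> is_linear (fun u => c * f u).
Proof. by move=> hf x y z; rewrite hf mulrDr scalerAr. Qed.

Lemma is_linear_mulr (c : A) (f : A -> A) : is_linear f -> is_linear (fun u => f u * c).
Proof. by move=> hf x y z; rewrite hf mulrDl scalerAl. Qed.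

Lemma is_linear_mullk (c : k) (f : A -> k) :
  @is_linear k^o f -> @is_linear k^o (fun u => c * f u).
Proof. by move=> hf x y z; rewrite hf mulrDr /GRing.scale /= mulrCA. Qed.

Lemma is_linear_mulrk (c : k) (f : A -> k) :
  @is_linear k^o f -> @is_linear k^o (fun u => f u * c).
Proof. by move=> hf x y z; rewrite hf mulrDl /GRing.scale /= mulrA. Qed.

Lemma is_linear_scalel (W : lmodType k) (c : k) (f : A -> W) :
  is_linear f -> is_linear (fun u => c *: f u).
Proof. by move=> hf x y z; rewrite hf scalerDr !scalerA mulrC. Qed.

Lemma is_linear_scaler (W : lmodType k) (f : A -> k) (w : W) :
  @is_linear k^o f -> is_linear (fun u => f u *: w).
Proof. by move=> hf x y z; rewrite hf scalerDl scalerA. Qed.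

Lemma is_linear_big (W : lmodType k) I (s : seq I) (F : I -> A -> W) :
  (forall i, is_linear (F i)) -> is_linear (fun u => \sum_(i <- s) F i u).
Proof.
move=> hF x y z; rewrite scaler_sumr -big_split /=.
by apply: eq_bigr => i _; rewrite hF.
Qed.

Lemma is_linear_tensor_big (W : lmodType k) (D : A -> tens2 A) (F : A * A -> W) :
  tlinear D -> (forall y, is_linear (fun x => F (x, y))) ->
  (forall x, is_linear (fun y => F (x, y))) ->
  is_linear (fun v => \sum_(q <- D v) F q).
Proof.
move=> hD hF1 hF2 x y z.
have uncurry s : \sum_(q <- s) F q = \sum_(q <- s) (fun a b => F (a, b)) q.1 q.2.
  by apply: eq_bigr => -[].
rewrite !uncurry (hD x y z W (fun a b => F (a, b))) //.
rewrite big_cat /= big_map scaler_sumr; congr (_ + _).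
by apply: eq_bigr => -[a b] _ /=; rewrite (is_linearZ (hF1 b)).
Qed.

Lemma bilinear_mapI (W : lmodType k) (b : A -> A -> W) :
  (forall c, is_linear (fun u => b u c)) -> (forall c, is_linear (b c)) -> bilinear_map b.
Proof. by split. Qed.

Lemma bilinear_mapE (W : lmodType k) (b : A -> A -> W) :
  bilinear_map b -> (forall c, is_linear (fun u => b u c)) /\ (forall c, is_linear (b c)).
Proof. by []. Qed.

Lemma trilinear_mapI (W : lmodType k) (t : A -> A -> A -> W) :
  (forall c d, is_linear (fun u => t u c d)) -> (forall c d, is_linear (fun u => t c u d)) ->
  (forall c d, is_linear (t c d)) -> trilinear_map t.
Proof. by split. Qed.

Lemma trilinear_mapE (W : lmodType k) (t : A -> A -> A -> W) :
  trilinear_map t ->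
  [/\ forall c d, is_linear (fun u => t u c d), forall c d, is_linear (fun u => t c u d)
    & forall c d, is_linear (t c d)].
Proof. by []. Qed.

End LinearMaps.

Lemma ant_is_linear (k : fieldType) (A : comAlgType k) (H : hopf_data A) :
  is_hopf H -> is_linear (ant H).
Proof. by case. Qed.

Lemma cou_is_linear (k : fieldType) (A : comAlgType k) (H : hopf_data A) :
  is_hopf H -> @is_linear k A k^o (cou H).
Proof. by case. Qed.

Create HintDb tlinear.

Ltac lin_hyp := first
  [ assumption
  | solve [eauto with tlinear]
  | match goal with
    | h : forall _ _, is_linear _ |- _ => apply h
    | h : forall _, is_linear _ |- _ => apply h
    | h : is_hopf ?H |- is_linear (ant ?H) => exact (ant_is_linear h)
    | h : is_hopf ?H |- is_linear (cou ?H) => exact (cou_is_linear h)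
    | h : is_hopf ?H |- tlinear (cop ?H) => exact (cop_linear h)
    end ].

(* Proves [is_linear (fun u => E)] by recursion on [E]: sums over tensors,
   products and scalings by constants, linear maps applied to [E]. *)
Ltac lin_tac :=
  cbn [fst snd];
  match goal with
  | |- is_linear (fun u => u) => exact (@is_linear_id _ _)
  | |- is_linear (fun u => \sum_(i <- ?s) @?F u i) =>
      refine (@is_linear_big _ _ _ _ s (fun i u => F u i) _); intro; lin_tac
  | |- @is_linear _ _ ?W (fun u => \sum_(q <- ?D (@?f u)) @?F q) =>
      refine (@is_linear_comp _ _ W (fun v => \sum_(q <- D v) F q) f _ _);
      [ apply is_linear_tensor_big; [ lin_hyp | intro; lin_tac | intro; lin_tac ] | lin_tac ]
  | |- is_linear (fun u => ?c *: @?f u) => refine (@is_linear_scalel _ _ _ c f _); lin_tac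
  | |- is_linear (fun u => @?f u *: ?w) => refine (@is_linear_scaler _ _ _ f w _); lin_tac
  | |- is_linear (fun u => ?c * @?f u) =>
      first [ refine (@is_linear_mull _ _ c f _) | refine (@is_linear_mullk _ _ c f _) ]; lin_tac
  | |- is_linear (fun u => @?f u * ?c) =>
      first [ refine (@is_linear_mulr _ _ c f _) | refine (@is_linear_mulrk _ _ c f _) ]; lin_tac
  | |- @is_linear _ _ ?W (fun u => ?g (@?f u, ?c) ?d) =>
      refine (@is_linear_comp _ _ W (fun v => g (v, c) d) f _ _); [ lin_hyp | lin_tac ]
  | |- @is_linear _ _ ?W (fun u => ?g (?c, @?f u) ?d) =>
      refine (@is_linear_comp _ _ W (fun v => g (c, v) d) f _ _); [ lin_hyp | lin_tac ]
  | |- @is_linear _ _ ?W (fun u => ?g ?d (@?f u, ?c)) =>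
      refine (@is_linear_comp _ _ W (fun v => g d (v, c)) f _ _); [ lin_hyp | lin_tac ]
  | |- @is_linear _ _ ?W (fun u => ?g ?d (?c, @?f u)) =>
      refine (@is_linear_comp _ _ W (fun v => g d (c, v)) f _ _); [ lin_hyp | lin_tac ]
  | |- @is_linear _ _ ?W (fun u => ?g (?c, @?f u)) =>
      refine (@is_linear_comp _ _ W (fun v => g (c, v)) f _ _); [ lin_hyp | lin_tac ]
  | |- @is_linear _ _ ?W (fun u => ?g (@?f u, ?c)) =>
      refine (@is_linear_comp _ _ W (fun v => g (v, c)) f _ _); [ lin_hyp | lin_tac ]
  | |- @is_linear _ _ ?W (fun u => ?g (@?f u) ?c ?d) =>
      refine (@is_linear_comp _ _ W (fun v => g v c d) f _ _); [ lin_hyp | lin_tac ]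
  | |- @is_linear _ _ ?W (fun u => ?g (@?f u) ?c) =>
      refine (@is_linear_comp _ _ W (fun v => g v c) f _ _); [ lin_hyp | lin_tac ]
  | |- @is_linear _ _ ?W (fun u => ?g (@?f u)) =>
      refine (@is_linear_comp _ _ W g f _ _); [ lin_hyp | lin_tac ]
  | |- is_linear _ => lin_hyp
  end.

(* Multilinearity side conditions, and hypotheses saying that a summand ignores
   one component of a pair. *)
Ltac lin_side := solve
  [ apply: trilinear_mapI; intros; lin_tac
  | apply: bilinear_mapI; intros; lin_tac
  | lin_tac
  | by move=> [? ?] [? ?] | by move=> [? ?] | by move=> [[? ?] ?] ].

Section TensorSums.
Variables (k : fieldType) (A : comAlgType k) (W : lmodType k).

Lemma teq2_big (s t : tens2 A) (B : A * A -> W) :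
  teq2 s t -> bilinear_map (fun a b => B (a, b)) -> \sum_(p <- s) B p = \sum_(p <- t) B p.
Proof.
move=> st hB; have uncurry u : \sum_(p <- u) B p = \sum_(p <- u) (fun a b => B (a, b)) p.1 p.2.
  by apply: eq_bigr => -[].
by rewrite !uncurry (st W _ hB).
Qed.

Lemma big_compL (F : A -> tens2 A) (s : tens2 A) (t : A -> A -> A -> W) :
  \sum_(p <- compL F s) t p.1.1 p.1.2 p.2 = \sum_(p <- s) \sum_(q <- F p.1) t q.1 q.2 p.2.
Proof. by rewrite big_flatten big_map; apply: eq_bigr => p _; rewrite big_map. Qed.

Lemma big_compR (F : A -> tens2 A) (s : tens2 A) (t : A -> A -> A -> W) :
  \sum_(p <- compR F s) t p.1.1 p.1.2 p.2 = \sum_(p <- s) \sum_(q <- F p.2) t p.1 q.1 q.2.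
Proof. by rewrite big_flatten big_map; apply: eq_bigr => p _; rewrite big_map. Qed.

Lemma big_tmul (s t : tens2 A) (B : A * A -> W) :
  \sum_(p <- tmul s t) B p = \sum_(p <- s) \sum_(q <- t) B (p.1 * q.1, p.2 * q.2).
Proof. by rewrite /tmul big_allpairs_dep. Qed.

Lemma big_tmap f g (s : tens2 A) (B : A * A -> W) :
  \sum_(p <- tmap f g s) B p = \sum_(p <- s) B (f p.1, g p.2).
Proof. by rewrite big_map. Qed.

(* Identities of the shape [teq3 (compL F s) (compR G s)] as rewrite rules under
   binders: the summand [B p q] ignores [p.1] (resp. [p.2]), so that [B] can be
   found by higher-order matching. *)
Lemma big_teq3L (F G : A -> tens2 A) (s : tens2 A) (B : A * A -> A * A -> W) :
  teq3 (compL F s) (compR G s) ->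
  (forall p q, B p q = B (0, p.2) q) -> trilinear_map (fun a b c => B (0, c) (a, b)) ->
  \sum_(p <- s) \sum_(q <- F p.1) B p q = \sum_(p <- s) \sum_(q <- G p.2) B (0, q.2) (p.1, q.1).
Proof.
move=> FG hB ht; set t := fun a b c => B (0, c) (a, b).
transitivity (\sum_(p <- s) \sum_(q <- F p.1) t q.1 q.2 p.2).
  by apply: eq_bigr => p _; apply: eq_bigr => -[a b] _; rewrite /t -hB.
by rewrite -big_compL (FG W t ht); apply: (big_compR G s t).
Qed.

Lemma big_teq3R (F G : A -> tens2 A) (s : tens2 A) (B : A * A -> A * A -> W) :
  teq3 (compL F s) (compR G s) ->
  (forall p q, B p q = B (p.1, 0) q) -> trilinear_map (fun a b c => B (a, 0) (b, c)) ->
  \sum_(p <- s) \sum_(q <- G p.2) B p q = \sum_(p <- s) \sum_(q <- F p.1) B (q.1, 0) (q.2, p.2).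
Proof.
move=> FG hB ht; set t := fun a b c => B (a, 0) (b, c).
transitivity (\sum_(p <- s) \sum_(q <- G p.2) t p.1 q.1 q.2).
  by apply: eq_bigr => -[a b] _; apply: eq_bigr => -[c d] _; rewrite /t -hB.
by rewrite -big_compR -(FG W t ht); apply: (big_compL F s t).
Qed.

End TensorSums.

Lemma tlinear_big (k : fieldType) (A : comAlgType k) (F : A -> tens2 A) :
  (forall (W : lmodType k) (B : A * A -> W), bilinear_map (fun a b => B (a, b)) ->
     forall x a b, \sum_(r <- F (x *: a + b)) B r =
         x *: \sum_(r <- F a) B r + \sum_(r <- F b) B r) ->
  tlinear F.
Proof.
move=> hF x a b W B hB; have [hB1 _] := bilinear_mapE hB.
rewrite (hF W (fun r => B r.1 r.2)) // big_cat big_map /=; congr (_ + _).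
by rewrite scaler_sumr; apply: eq_bigr => p _; rewrite (is_linearZ (hB1 _)).
Qed.

Lemma scalerAC (k : fieldType) (W : lmodType k) (x y : k) (v : W) :
  x *: (y *: v) = y *: (x *: v).
Proof. by rewrite !scalerA mulrC. Qed.

Section HopfAlgebra.
Variables (k : fieldType) (A : comAlgType k) (H : hopf_data A) (hH : is_hopf H).
Local Notation D := (cop H).
Local Notation e := (cou H).
Local Notation S := (ant H).

Section Sums.
Variable W : lmodType k.

Lemma big_coassocL h (B : A * A -> A * A -> W) :
  (forall p q, B p q = B (0, p.2) q) -> trilinear_map (fun a b c => B (0, c) (a, b)) ->
  \sum_(p <- D h) \sum_(q <- D p.1) B p q = \sum_(p <- D h) \sum_(q <- D p.2) B (0, q.2) (p.1, q.1).
Proof. exact: big_teq3L (coassoc hH h). Qed.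

Lemma big_coassocR h (B : A * A -> A * A -> W) :
  (forall p q, B p q = B (p.1, 0) q) -> trilinear_map (fun a b c => B (a, 0) (b, c)) ->
  \sum_(p <- D h) \sum_(q <- D p.2) B p q = \sum_(p <- D h) \sum_(q <- D p.1) B (q.1, 0) (q.2, p.2).
Proof. exact: big_teq3R (coassoc hH h). Qed.

Lemma big_counitL h (B : A * A -> W) :
  (forall p, B p = B (0, p.2)) -> is_linear (fun y => B (0, y)) ->
  \sum_(p <- D h) e p.1 *: B p = B (0, h).
Proof.
move=> hB hl; rewrite -{2}(counitL hH h) (is_linear_sum hl).
by apply: eq_bigr => p _; rewrite (is_linearZ hl) hB.
Qed.

Lemma big_counitR h (B : A * A -> W) :
  (forall p, B p = B (p.1, 0)) -> is_linear (fun y => B (y, 0)) ->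
  \sum_(p <- D h) e p.2 *: B p = B (h, 0).
Proof.
move=> hB hl; rewrite -{2}(counitR hH h) (is_linear_sum hl).
by apply: eq_bigr => p _; rewrite (is_linearZ hl) hB.
Qed.

Lemma big_antipodeL h (g : A -> W) : is_linear g -> \sum_(p <- D h) g (S p.1 * p.2) = e h *: g 1.
Proof. by move=> hg; rewrite -(is_linearZ hg) -(antipodeL hH h) (is_linear_sum hg). Qed.

Lemma big_antipodeR h (g : A -> W) : is_linear g -> \sum_(p <- D h) g (p.1 * S p.2) = e h *: g 1.
Proof. by move=> hg; rewrite -(is_linearZ hg) -(antipodeR hH h) (is_linear_sum hg). Qed.

Lemma big_copM x y (B : A * A -> W) : bilinear_map (fun a b => B (a, b)) ->
  \sum_(p <- D (x * y)) B p = \sum_(p <- D x) \sum_(q <- D y) B (p.1 * q.1, p.2 * q.2).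
Proof. by move=> hB; rewrite (teq2_big (cop_mul hH x y) hB) big_tmul. Qed.

Lemma big_cop1 (B : A * A -> W) : bilinear_map (fun a b => B (a, b)) ->
  \sum_(p <- D 1) B p = B (1, 1).
Proof. by move=> hB; rewrite (teq2_big (cop_one hH) hB) big_cons big_nil addr0. Qed.

End Sums.

Lemma big_counitL_scalar h (B : A * A -> k) :
  (forall p, B p = B (0, p.2)) -> @is_linear _ _ k^o (fun y => B (0, y)) ->
  \sum_(p <- D h) e p.1 * B p = B (0, h).
Proof. exact: (@big_counitL k^o). Qed.

Lemma big_counitR_scalar h (B : A * A -> k) :
  (forall p, B p = B (p.1, 0)) -> @is_linear _ _ k^o (fun y => B (y, 0)) ->
  \sum_(p <- D h) e p.2 * B p = B (h, 0).
Proof. exact: (@big_counitR k^o). Qed.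

Lemma ant1 : S 1 = 1.
Proof.
have := antipodeL hH 1; rewrite (big_cop1 (B := fun p => S p.1 * p.2)); last by lin_side.
by rewrite mulr1 cou_one // scale1r.
Qed.

Lemma couZ x a : e (x *: a) = x * e a.
Proof. exact: (is_linearZ (cou_is_linear hH)). Qed.

Lemma cou_sum I (r : seq I) (F : I -> A) : e (\sum_(i <- r) F i) = \sum_(i <- r) e (F i).
Proof. exact: (is_linear_sum (cou_is_linear hH)). Qed.

Lemma antM a b : S (a * b) = S a * S b.
Proof.
(* Both sides equal [S (a_1 b_1) a_2 S (a_3) b_2 S (b_3)]; commutativity lets
   [a_2 b_2 = (a b)_2] meet [S ((a b)_1)]. *)
pose M := \sum_(p <- D a) \sum_(q <- D b) \sum_(r <- D p.2) \sum_(s <- D q.2)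
            S (p.1 * q.1) * (r.1 * S r.2) * (s.1 * S s.2).
have E1 : M = S (a * b).
  rewrite /M.
  under eq_bigr => p _ do under eq_bigr => q _ do
    [rewrite (big_antipodeR _
        (g := fun z => \sum_(s <- D q.2) S (p.1 * q.1) * z * (s.1 * S s.2))); [|lin_side..];
     rewrite (big_antipodeR _ (g := fun z => S (p.1 * q.1) * 1 * z)); [|lin_side..];
     rewrite !mulr1 scalerAC].
  under eq_bigr => p _ do [rewrite (big_counitR _
      (B := fun q => e p.2 *: S (p.1 * q.1))) /=; [|lin_side..]].
  by rewrite (big_counitR _ (B := fun p => S (p.1 * b))) /=; [|lin_side..].
rewrite -E1 /M; clear E1 M.
under eq_bigr => p _ do rewrite exchange_big.
rewrite big_coassocR //=; [|lin_side..].
under eq_bigr => p _ do under eq_bigr => r _ do [rewrite big_coassocR //=; [|lin_side..]].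
under eq_bigr => p _ do rewrite exchange_big.
under eq_bigr => p _ do under eq_bigr => q _ do
  [rewrite (eq_bigr (fun r => \sum_(s <- D q.1) S (r.1 * s.1) * (r.2 * s.2) * (S p.2 * S q.2)));
     last (by move=> r _; apply: eq_bigr => s _; ring);
   rewrite -(big_copM _ _ (B := fun w => S w.1 * w.2 * (S p.2 * S q.2))); [|lin_side..];
   rewrite (big_antipodeL _ (g := fun z => z * (S p.2 * S q.2))); [|lin_side..];
   rewrite cou_mul // -scalerA scalerAC].
under eq_bigr => p _ do [rewrite (big_counitL _
    (B := fun q => e p.1 *: (1 * (S p.2 * S q.2)))) /=; [|lin_side..]].
by rewrite (big_counitL _ (B := fun p => 1 * (S p.2 * S b))) /= ?mul1r; [|lin_side..].
Qed.

Lemma cou_ant h : e (S h) = e h.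
Proof.
have E := congr1 e (antipodeL hH h); rewrite couZ // cou_one // mulr1 cou_sum // in E.
rewrite -E -{1}(counitR hH h) (is_linear_sum (ant_is_linear hH)) cou_sum //.
apply: eq_bigr => p _; rewrite (is_linearZ (ant_is_linear hH)) couZ // cou_mul //; exact: mulrC.
Qed.

Lemma antK h : S (S h) = h.
Proof.
transitivity (\sum_(p <- D h) \sum_(q <- D p.2) S (S p.1) * (S q.1 * q.2)).
  under eq_bigr => p _ do rewrite -big_distrr /= (antipodeL hH) -scalerAr mulr1.
  by rewrite (big_counitR _ (B := fun p => S (S p.1))) /=; [|lin_side..].
rewrite big_coassocR //=; [|lin_side..].
under eq_bigr => p _ do under eq_bigr => q _ do rewrite mulrA -antM.
under eq_bigr => p _ do [rewrite (big_antipodeL _ (g := fun z => S z * p.2)) /=; [|lin_side..]].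
rewrite ant1 //; under eq_bigr => p _ do rewrite mul1r.
by rewrite (big_counitL _ (B := fun p => p.2)) /=; [|lin_side..].
Qed.

(* [(S (x) S) Delta^op] is a left convolution inverse of [Delta], hence equal to
   its right inverse [Delta S]. *)
Lemma big_ant_cop_inv (W : lmodType k) x (G : A * A -> W) : bilinear_map (fun a b => G (a, b)) ->
  \sum_(q <- D x) \sum_(s <- D q.1) \sum_(r <- D q.2) G (S s.2 * r.1, S s.1 * r.2) =
    e x *: G (1, 1).
Proof.
move=> hG; have [hG1 hG2] := bilinear_mapE hG.
rewrite big_coassocL //=; [|lin_side..].
under eq_bigr => q _ do [rewrite big_coassocR //=; [|lin_side..]].
under eq_bigr => q _ do under eq_bigr => s _ do
  [rewrite (big_antipodeL _ (g := fun z => G (z, S q.1 * s.2))) /=; [|lin_side..]].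
under eq_bigr => q _ do [rewrite (big_counitL _ (B := fun s => G (1, S q.1 * s.2))) /=;
    [|lin_side..]].
by rewrite (big_antipodeL _ (g := fun z => G (1, z))) /=; [|lin_side..].
Qed.

Lemma big_cop_ant (W : lmodType k) h (B : A * A -> W) : bilinear_map (fun a b => B (a, b)) ->
  \sum_(w <- D (S h)) B w = \sum_(p <- D h) B (S p.2, S p.1).
Proof.
move=> hB; have [hB1 hB2] := bilinear_mapE hB.
transitivity (\sum_(p <- D h) e p.1 *: \sum_(w <- D (S p.2)) B w).
  by rewrite (big_counitL _ (B := fun p => \sum_(w <- D (S p.2)) B w)) /=; [|lin_side..].
transitivity (\sum_(p <- D h) \sum_(w <- D (S p.2)) \sum_(q <- D p.1) \sum_(s <- D q.1)
   \sum_(r <- D q.2) B (S s.2 * r.1 * w.1, S s.1 * r.2 * w.2)).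
  apply: eq_bigr => p _; rewrite scaler_sumr; apply: eq_bigr => -[w1 w2] _.
  rewrite (big_ant_cop_inv _ (G := fun z => B (z.1 * w1, z.2 * w2))) /= ?mul1r //; lin_side.
under eq_bigr => p _ do rewrite exchange_big.
under eq_bigr => p _ do under eq_bigr => q _ do rewrite exchange_big.
under eq_bigr => p _ do under eq_bigr => q _ do under eq_bigr => s _ do rewrite exchange_big.
rewrite big_coassocL //=; [|lin_side..].
under eq_bigr => p _ do rewrite exchange_big.
under eq_bigr => p _ do under eq_bigr => s _ do under eq_bigr => q _ do
  under eq_bigr => r _ do under eq_bigr => w _ do rewrite -!mulrA.
under eq_bigr => p _ do under eq_bigr => s _ do under eq_bigr => q _ do
  [rewrite -(big_copM _ _ (B := fun z => B (S s.2 * z.1, S s.1 * z.2))); [|lin_side..]].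
under eq_bigr => p _ do under eq_bigr => s _ do
  [rewrite (big_antipodeR _ (g := fun y => \sum_(z <- D y) B (S s.2 * z.1, S s.1 * z.2))) /=;
      [|lin_side..];
   rewrite (big_cop1 (B := fun z => B (S s.2 * z.1, S s.1 * z.2))) /=; [|lin_side..]].
under eq_bigr => p _ do under eq_bigr => s _ do rewrite !mulr1.
under eq_bigr => p _ do rewrite -scaler_sumr.
by rewrite (big_counitR _ (B := fun p => \sum_(s <- D p.1) B (S s.2, S s.1))) /=; [|lin_side..].
Qed.

End HopfAlgebra.

Section HopfBrace.
Variables (k : fieldType) (A : comAlgType k) (H H' : hopf_data A) (hb : hopf_brace H H').
Let hH := hb_hopf hb.
Let hH' := hb_hopf' hb.
Local Notation D := (cop H).
Local Notation e := (cou H).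
Local Notation S := (ant H).
Local Notation D' := (cop H').
Local Notation e' := (cou H').
Local Notation T := (ant H').
Local Notation rho := (brace_rho H H').
Local Notation phi := (brace_phi H H').

Lemma big_compat3 (W : lmodType k) h (t3 : A -> A -> A -> W) : trilinear_map t3 ->
  \sum_(p <- D' h) \sum_(q <- D p.2) t3 p.1 q.1 q.2 =
  \sum_(p <- D h) \sum_(q <- D p.1) \sum_(u <- D' q.1) \sum_(v <- D' p.2)
    t3 (u.1 * S q.2 * v.1) u.2 v.2.
Proof.
move=> ht; rewrite -(big_compR D (D' h) t3) (hb_compat hb h ht).
rewrite big_flatten big_map /delta3 big_flatten big_map; apply: eq_bigr => p _.
rewrite big_map; apply: eq_bigr => q _.
by rewrite big_allpairs_dep.
Qed.

Lemma big_compat (W : lmodType k) h (B : A * A -> A * A -> W) :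
  (forall p q, B p q = B (p.1, 0) q) -> trilinear_map (fun a b c => B (a, 0) (b, c)) ->
  \sum_(p <- D' h) \sum_(q <- D p.2) B p q =
  \sum_(p <- D h) \sum_(q <- D p.1) \sum_(u <- D' q.1) \sum_(v <- D' p.2)
    B (u.1 * S q.2 * v.1, 0) (u.2, v.2).
Proof.
move=> hB ht; rewrite -(big_compat3 h ht).
by apply: eq_bigr => p _; apply: eq_bigr => -[a b] _; rewrite hB.
Qed.

Lemma cou_ant_brace h : e' (S h) = e h.
Proof.
pose t3 := fun x y z => e' x * (e y * e z) : k^o.
have ht : trilinear_map t3 by rewrite /t3; lin_side.
have E : \sum_(p <- D' h) \sum_(q <- D p.2) e' p.1 * (e q.1 * e q.2) =
  \sum_(p <- D h) \sum_(q <- D p.1) \sum_(u <- D' q.1) \sum_(v <- D' p.2)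
     e' (u.1 * S q.2 * v.1) * (e u.2 * e v.2) := big_compat3 h ht.
move: E.
under eq_bigr => p _ do [rewrite -big_distrr (big_counitL_scalar hH _
    (B := fun q => e q.2)) /=; [|lin_side..]].
rewrite (big_counitL_scalar hH' _ (B := fun p => e p.2)) /=; [|lin_side..].
under eq_bigr => p _ do under eq_bigr => q _ do under eq_bigr => u _ do
  [rewrite (eq_bigr (fun v => (e' u.1 * e' (S q.2) * e u.2) * (e' v.1 * e v.2))); last first;
     [by move=> v _; rewrite !cou_mul //; ring
     | rewrite -big_distrr (big_counitL_scalar hH' _ (B := fun v => e v.2)) /=; [|lin_side..]]].
under eq_bigr => p _ do under eq_bigr => q _ do
  [rewrite (eq_bigr (fun u => e' u.1 * (e u.2 * (e' (S q.2) * e p.2)))); last (by move=> u _; ring);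
   rewrite (big_counitL_scalar hH' _ (B := fun u => e u.2 * (e' (S q.2) * e p.2))) /=;
       [|lin_side..]].
under eq_bigr => p _ do [rewrite (big_counitL_scalar hH _
    (B := fun q => e' (S q.2) * e p.2)) /=; [|lin_side..]].
rewrite (eq_bigr (fun p => e p.2 * e' (S p.1))); last (by move=> p _; ring).
by rewrite (big_counitR_scalar hH _ (B := fun p => e' (S p.1))) /=; [move=> ->|lin_side..].
Qed.

Lemma brace_couE h : e h = e' h.
Proof.
have := congr1 e' (antipodeL hH h); rewrite couZ // cou_one // mulr1 cou_sum //.
under eq_bigr => p _ do rewrite cou_mul // cou_ant_brace.
by rewrite (big_counitL_scalar hH _ (B := fun p => e' p.2)) /=; [move=> ->|lin_side..].
Qed.

(* [h |-> S(h_1) h_(21') S(h_3) (x) S(h_(22'))] is a right convolution inverse of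
   [Delta'], hence equal to its left inverse [Delta' S]. *)
Lemma big_brace_ant_inv (W : lmodType k) x (G : A * A -> W) : bilinear_map (fun a b => G (a, b)) ->
  \sum_(p <- D x) \sum_(w <- D' p.1) \sum_(f <- D p.2) \sum_(g <- D f.1) \sum_(i <- D' g.2)
     G (w.1 * (S g.1 * i.1 * S f.2), w.2 * S i.2) = e x *: G (1, 1).
Proof.
move=> hG; have [hG1 hG2] := bilinear_mapE hG.
under eq_bigr => p _ do rewrite exchange_big.
rewrite big_coassocR //=; [|lin_side..].
under eq_bigr => p _ do under eq_bigr => f _ do rewrite exchange_big.
under eq_bigr => p _ do [rewrite big_coassocR //=; [|lin_side..]].
under eq_bigr => p _ do under eq_bigr => f _ do under eq_bigr => g _ do under eq_bigr => w _ do
  under eq_bigr => i _ do rewrite (_ : w.1 * (S g.2 * i.1 * S p.2) =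
      w.1 * S g.2 * i.1 * S p.2) ?mulrA //.
under eq_bigr => p _ do [rewrite -(big_compat3 _
    (t3 := fun a b c => G (a * S p.2, b * S c))); [|lin_side..]].
under eq_bigr => p _ do under eq_bigr => m _ do
  [rewrite (big_antipodeR hH _ (g := fun z => G (m.1 * S p.2, z))) /=; [|lin_side..]].
under eq_bigr => p _ do under eq_bigr => m _ do rewrite (brace_couE).
under eq_bigr => p _ do [rewrite (big_counitR hH' _
    (B := fun m => G (m.1 * S p.2, 1))) /=; [|lin_side..]].
by rewrite (big_antipodeR hH _ (g := fun z => G (z, 1))) /=; [|lin_side..].
Qed.

Lemma big_cop'_ant (W : lmodType k) h (B : A * A -> W) : bilinear_map (fun a b => B (a, b)) ->
  \sum_(w <- D' (S h)) B w =
  \sum_(f <- D h) \sum_(g <- D f.1) \sum_(i <- D' g.2) B (S g.1 * i.1 * S f.2, S i.2).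
Proof.
move=> hB; have [hB1 hB2] := bilinear_mapE hB.
transitivity (\sum_(p <- D h) e p.2 *: \sum_(w <- D' (S p.1)) B w).
  by rewrite (big_counitR hH _ (B := fun p => \sum_(w <- D' (S p.1)) B w)) /=; [|lin_side..].
transitivity (\sum_(p <- D h) \sum_(w <- D' (S p.1)) \sum_(q <- D p.2) \sum_(v <- D' q.1)
   \sum_(f <- D q.2) \sum_(g <- D f.1) \sum_(i <- D' g.2)
     B (w.1 * (v.1 * (S g.1 * i.1 * S f.2)), w.2 * (v.2 * S i.2))).
  apply: eq_bigr => p _; rewrite scaler_sumr; apply: eq_bigr => -[w1 w2] _.
  rewrite (big_brace_ant_inv _ (G := fun z => B (w1 * z.1, w2 * z.2))) /= ?mulr1 //; lin_side.
under eq_bigr => p _ do rewrite exchange_big.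
rewrite big_coassocR //=; [|lin_side..].
under eq_bigr => p _ do under eq_bigr => q _ do under eq_bigr => w _ do under eq_bigr => v _ do
  under eq_bigr => f _ do under eq_bigr => g _ do under eq_bigr => i _ do rewrite !mulrA.
under eq_bigr => p _ do under eq_bigr => q _ do
  [rewrite -(big_copM hH' _ _ (B := fun z => \sum_(f <- D p.2) \sum_(g <- D f.1) \sum_(i <- D' g.2)
       B (z.1 * S g.1 * i.1 * S f.2, z.2 * S i.2))); [|lin_side..]].
under eq_bigr => p _ do
  [rewrite (big_antipodeL hH _
      (g := fun y => \sum_(z <- D' y) \sum_(f <- D p.2) \sum_(g <- D f.1) \sum_(i <- D' g.2)
       B (z.1 * S g.1 * i.1 * S f.2, z.2 * S i.2))) /=; [|lin_side..];
   rewrite (big_cop1 hH' (B := fun z => \sum_(f <- D p.2) \sum_(g <- D f.1) \sum_(i <- D' g.2)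
       B (z.1 * S g.1 * i.1 * S f.2, z.2 * S i.2))) /=; [|lin_side..]].
under eq_bigr => p _ do under eq_bigr => f _ do under eq_bigr => g _ do under eq_bigr => i _ do
  rewrite !mul1r.
by rewrite (big_counitL hH _ (B := fun p => \sum_(f <- D p.2) \sum_(g <- D f.1) \sum_(i <- D' g.2)
       B (S g.1 * i.1 * S f.2, S i.2))) /=; [|lin_side..].
Qed.

Lemma big_rho (W : lmodType k) a (B : A * A -> W) :
  \sum_(r <- rho a) B r = \sum_(p <- D a) \sum_(q <- D' p.2) B (S p.1 * q.1, q.2).
Proof. by rewrite big_flatten big_map; apply: eq_bigr => p _; rewrite big_map. Qed.

Lemma rho_tlinear : tlinear rho.
Proof.
apply: tlinear_big => W B hB x a b; have [hB1 hB2] := bilinear_mapE hB.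
rewrite !big_rho.
suff L : is_linear (fun v => \sum_(p <- D v) \sum_(q <- D' p.2) B (S p.1 * q.1, q.2)) by exact: L.
lin_tac.
Qed.
#[local] Hint Resolve rho_tlinear : tlinear.

Lemma rho_counit a : \sum_(r <- rho a) e' r.1 *: r.2 = a.
Proof.
rewrite (big_rho _ (fun r => e' r.1 *: r.2)) /=.
under eq_bigr => p _ do under eq_bigr => q _ do rewrite cou_mul // -scalerA.
under eq_bigr => p _ do rewrite -scaler_sumr (counitL hH') (cou_ant_brace).
exact: (counitL hH a).
Qed.

Lemma rho1 : teq2 (rho 1) [:: (1, 1)].
Proof.
move=> W b hB; have [hB1 hB2] := bilinear_mapE hB.
rewrite big_cons big_nil addr0 (big_rho _ (fun r => b r.1 r.2)) /=.
rewrite (big_cop1 hH (B := fun p => \sum_(q <- D' p.2) b (S p.1 * q.1) q.2)) /=; [|lin_side..].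
rewrite (big_cop1 hH' (B := fun q => b (S 1 * q.1) q.2)) /=; [|lin_side..].
by rewrite ant1 // mulr1.
Qed.

Lemma rhoM a b : teq2 (rho (a * b)) (tmul (rho a) (rho b)).
Proof.
move=> W b' hB; have [hB1 hB2] := bilinear_mapE hB.
rewrite (big_rho _ (fun r => b' r.1 r.2)) (big_tmul _ _ (fun r => b' r.1 r.2)) /=.
rewrite (big_rho _ (fun r => \sum_(q <- rho b) b' (r.1 * q.1) (r.2 * q.2))) /=.
under [in RHS]eq_bigr => p _ do under eq_bigr => q _ do rewrite big_rho.
rewrite (big_copM hH) /=; [|lin_side..].
under eq_bigr => p _ do under eq_bigr => p' _ do [rewrite (big_copM hH'); [|lin_side..]].
under [in RHS]eq_bigr => p _ do rewrite exchange_big.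
by do 4 (apply: eq_bigr => ? _); rewrite /= antM // mulrACA.
Qed.

Lemma rho_coas a : teq3 (compL D' (rho a)) (compR rho (rho a)).
Proof.
move=> W t ht; have [ht1 ht2 ht3] := trilinear_mapE ht.
rewrite big_compL big_compR.
rewrite (big_rho _ (fun r => \sum_(w <- D' r.1) t w.1 w.2 r.2)).
rewrite (big_rho _ (fun r => \sum_(w <- rho r.2) t r.1 w.1 w.2)) /=.
under [in RHS]eq_bigr => p _ do under eq_bigr => q _ do rewrite big_rho.
under eq_bigr => p _ do under eq_bigr => q _ do [rewrite (big_copM hH'); [|lin_side..]].
under eq_bigr => p _ do under eq_bigr => q _ do [rewrite big_cop'_ant; [|lin_side..]].
under eq_bigr => p _ do rewrite exchange_big.
under eq_bigr => p _ do under eq_bigr => f _ do rewrite exchange_big.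
under eq_bigr => p _ do under eq_bigr => f _ do under eq_bigr => g _ do rewrite exchange_big.
under eq_bigr => p _ do under eq_bigr => f _ do under eq_bigr => g _ do under eq_bigr => i _ do
  [rewrite (big_coassocL hH') //=; [|lin_side..]].
symmetry.
under eq_bigr => p _ do [rewrite big_compat //=; [|lin_side..]].
under eq_bigr => p _ do [rewrite (big_coassocL hH) //=; [|lin_side..]].
rewrite (big_coassocR hH) //=; [|lin_side..].
under eq_bigr => p _ do rewrite exchange_big.
rewrite (big_coassocR hH) //=; [|lin_side..].
do 6 (apply: eq_bigr => ? _); congr (t _ _ _); ring.
Qed.

Lemma rho_left_comodule_algebra : left_comodule_algebra H' rho.
Proof.
by split; [exact: rho_tlinear | exact: rho_coas | exact: rho_counit | exact: rhoM | exact: rho1].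
Qed.

Lemma rho_ant a : teq2 (tmap id S (rho a)) (rho (S a)).
Proof.
move=> W b hB; have [hB1 hB2] := bilinear_mapE hB.
rewrite (big_tmap _ _ _ (fun r => b r.1 r.2)) /= (big_rho _ (fun r => b r.1 (S r.2))).
rewrite (big_rho _ (fun r => b r.1 r.2)) /=.
rewrite (big_cop_ant hH _ (B := fun p => \sum_(q <- D' p.2) b (S p.1 * q.1) q.2)) /=; [|lin_side..].
under [in RHS]eq_bigr => p _ do rewrite antK //.
under [in RHS]eq_bigr => p _ do [rewrite big_cop'_ant; [|lin_side..]].
rewrite [in RHS](big_coassocL hH) //=; [|lin_side..].
under [in RHS]eq_bigr => p _ do rewrite exchange_big.
under [in RHS]eq_bigr => p _ do under eq_bigr => g _ do rewrite exchange_big.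
under [in RHS]eq_bigr => p _ do under eq_bigr => g _ do under eq_bigr => i _ do
  [rewrite (eq_bigr (fun f => b (S g.1 * i.1 * (S f.1 * f.2)) (S i.2)));
     last (by move=> f _; congr (b _ _); ring);
   rewrite (big_antipodeL hH _ (g := fun z => b (S g.1 * i.1 * z) (S i.2))) /=; [|lin_side..]].
under [in RHS]eq_bigr => p _ do under eq_bigr => g _ do under eq_bigr => i _ do rewrite mulr1.
under [in RHS]eq_bigr => p _ do under eq_bigr => g _ do rewrite -scaler_sumr.
under [in RHS]eq_bigr => p _ do rewrite -scaler_sumr.
by rewrite (big_counitR hH _
    (B := fun p => \sum_(g <- D p.1) \sum_(i <- D' g.2) b (S g.1 * i.1) (S i.2))) /=; [|lin_side..].
Qed.

Lemma big_rho_coassocL (W : lmodType k) z (B : A * A -> A * A -> W) :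
  (forall p q, B p q = B (0, p.2) q) -> trilinear_map (fun a b c => B (0, c) (a, b)) ->
  \sum_(r <- rho z) \sum_(w <- D' r.1) B r w =
    \sum_(r <- rho z) \sum_(w <- rho r.2) B (0, w.2) (r.1, w.1).
Proof. exact: big_teq3L (rho_coas z). Qed.

Lemma big_rho_coassocR (W : lmodType k) z (B : A * A -> A * A -> W) :
  (forall p q, B p q = B (p.1, 0) q) -> trilinear_map (fun a b c => B (a, 0) (b, c)) ->
  \sum_(r <- rho z) \sum_(w <- rho r.2) B r w =
    \sum_(r <- rho z) \sum_(w <- D' r.1) B (w.1, 0) (w.2, r.2).
Proof. exact: big_teq3R (rho_coas z). Qed.

Lemma big_rhoM (W : lmodType k) x y (B : A * A -> W) : bilinear_map (fun a b => B (a, b)) ->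
  \sum_(r <- rho (x * y)) B r = \sum_(r <- rho x) \sum_(s <- rho y) B (r.1 * s.1, r.2 * s.2).
Proof. by move=> hB; rewrite (teq2_big (rhoM x y) hB) big_tmul. Qed.

Lemma big_rho1 (W : lmodType k) (B : A * A -> W) : bilinear_map (fun a b => B (a, b)) ->
  \sum_(r <- rho 1) B r = B (1, 1).
Proof. by move=> hB; rewrite (teq2_big rho1 hB) big_cons big_nil addr0. Qed.

Lemma big_rho_counitL (W : lmodType k) v (g : A -> W) : is_linear g ->
  \sum_(r <- rho v) e' r.1 *: g r.2 = g v.
Proof.
move=> hg; rewrite -{2}(rho_counit v) (is_linear_sum hg).
by apply: eq_bigr => r _; rewrite (is_linearZ hg).
Qed.

Lemma big_rho_counitR (W : lmodType k) v (g : A -> W) : is_linear g ->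
  \sum_(r <- rho v) e' r.2 *: g r.1 = e v *: g 1.
Proof.
move=> hg; rewrite (big_rho _ (fun r => e' r.2 *: g r.1)) /=.
under eq_bigr => p _ do [rewrite (big_counitR hH' _
    (B := fun q => g (S p.1 * q.1))) /=; [|lin_side..]].
by rewrite (big_antipodeL hH _ (g := g)).
Qed.

Lemma big_phi (W : lmodType k) a (B : A * A -> W) :
  \sum_(x <- phi a) B x =
  \sum_(p <- D' a) \sum_(q <- D' p.1) \sum_(r <- rho (T q.1)) B (r.1 * q.2, r.2 * p.2).
Proof.
rewrite big_flatten big_map /delta3 /compL big_flatten big_map; apply: eq_bigr => p _.
rewrite big_map; apply: eq_bigr => q _; by rewrite big_map.
Qed.

Lemma phi_tlinear : tlinear phi.
Proof.
apply: tlinear_big => W B hB x a b; have [hB1 hB2] := bilinear_mapE hB.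
rewrite !big_phi.
suff L : is_linear (fun v => \sum_(p <- D' v) \sum_(q <- D' p.1) \sum_(r <- rho (T q.1))
   B (r.1 * q.2, r.2 * p.2)) by exact: L.
lin_tac.
Qed.
#[local] Hint Resolve phi_tlinear : tlinear.

Lemma phi_counit a : \sum_(x <- phi a) e' x.2 *: x.1 = a.
Proof.
rewrite (big_phi _ (fun x => e' x.2 *: x.1)) /=.
under eq_bigr => p _ do under eq_bigr => q _ do under eq_bigr => r _ do rewrite cou_mul // -scalerA.
under eq_bigr => p _ do under eq_bigr => q _ do
  [rewrite (big_rho_counitR _ (g := fun z => e' p.2 *: (z * q.2))) /=; [|lin_side..]].
under eq_bigr => p _ do under eq_bigr => q _ do
  rewrite brace_couE (cou_ant hH') mul1r scalerAC.
under eq_bigr => p _ do rewrite -scaler_sumr (counitL hH').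
exact: (counitR hH' a).
Qed.

Lemma phi1 : teq2 (phi 1) [:: (1, 1)].
Proof.
move=> W b hB; have [hB1 hB2] := bilinear_mapE hB.
rewrite big_cons big_nil addr0 (big_phi _ (fun x => b x.1 x.2)) /=.
rewrite (big_cop1 hH'
    (B := fun p => \sum_(q <- D' p.1) \sum_(r <- rho (T q.1)) b (r.1 * q.2) (r.2 * p.2))) /=;
  [|lin_side..].
rewrite (big_cop1 hH'
    (B := fun q => \sum_(r <- rho (T q.1)) b (r.1 * q.2) (r.2 * 1))) /=; [|lin_side..].
rewrite ant1 //.
by rewrite (big_rho1 (B := fun r => b (r.1 * 1) (r.2 * 1))) /= ?mulr1; [|lin_side..].
Qed.

Lemma big_phiM (W : lmodType k) x y (B : A * A -> W) : bilinear_map (fun a b => B (a, b)) ->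
  \sum_(r <- phi (x * y)) B r = \sum_(r <- phi x) \sum_(s <- phi y) B (r.1 * s.1, r.2 * s.2).
Proof.
move=> hB; have [hB1 hB2] := bilinear_mapE hB.
rewrite big_phi (big_phi _ (fun r => \sum_(s <- phi y) B (r.1 * s.1, r.2 * s.2))) /=.
under [in RHS]eq_bigr => p _ do under eq_bigr => q _ do under eq_bigr => r _ do rewrite big_phi.
rewrite (big_copM hH') /=; [|lin_side..].
under eq_bigr => p _ do under eq_bigr => p' _ do [rewrite (big_copM hH') /=; [|lin_side..]].
under eq_bigr => p _ do under eq_bigr => p' _ do under eq_bigr => q _ do under eq_bigr => q' _ do
  [rewrite antM // (big_rhoM _ _
      (B := fun r => B (r.1 * (q.2 * q'.2), r.2 * (p.2 * p'.2)))) /=; [|lin_side..]].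
under [in RHS]eq_bigr => p _ do under eq_bigr => q _ do rewrite exchange_big.
under [in RHS]eq_bigr => p _ do rewrite exchange_big.
under [in RHS]eq_bigr => p _ do under eq_bigr => p' _ do
    under eq_bigr => q _ do rewrite exchange_big.
by do 6 (apply: eq_bigr => ? _); congr (B (_, _)); ring.
Qed.

Lemma phiM a b : teq2 (phi (a * b)) (tmul (phi a) (phi b)).
Proof.
move=> W b' hB; have [hB1 hB2] := bilinear_mapE hB.
by rewrite (big_phiM _ _ (B := fun r => b' r.1 r.2)) ?big_tmul //=; lin_side.
Qed.

Lemma big_cop'_rho (W : lmodType k) w (B : A * A -> W) : bilinear_map (fun a b => B (a, b)) ->
  \sum_(c <- D' w) B c = \sum_(d <- D w) \sum_(s <- rho d.2) B (d.1 * s.1, s.2).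
Proof.
move=> hB; have [hB1 hB2] := bilinear_mapE hB.
under [in RHS]eq_bigr => d _ do rewrite (big_rho _ (fun s => B (d.1 * s.1, s.2))) /=.
rewrite [in RHS](big_coassocR hH) //=; [|lin_side..].
under [in RHS]eq_bigr => d _ do under eq_bigr => f _ do under eq_bigr => g _ do rewrite mulrA.
under [in RHS]eq_bigr => d _ do
  [rewrite (big_antipodeR hH _ (g := fun z => \sum_(g <- D' d.2) B (z * g.1, g.2))) /=;
      [|lin_side..]].
under [in RHS]eq_bigr => d _ do under eq_bigr => g _ do rewrite mul1r.
rewrite (big_counitL hH _ (B := fun d => \sum_(g <- D' d.2) B (g.1, g.2))) /=; [|lin_side..].
by apply: eq_bigr => -[].
Qed.

Lemma big_rho_rho_rho (W : lmodType k) z (t : A -> A -> A -> W) : trilinear_map t ->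
  \sum_(d <- D z) \sum_(s <- rho d.1) \sum_(r <- rho d.2) \sum_(m <- rho r.2)
     t (s.1 * r.1) (s.2 * m.1) m.2 =
  \sum_(p <- D z) \sum_(q <- D' p.2) \sum_(w <- D' q.1) t (S p.1 * w.1) w.2 q.2.
Proof.
move=> ht; have [ht1 ht2 ht3] := trilinear_mapE ht.
under eq_bigr => d _ do under eq_bigr => s _ do [rewrite big_rho_coassocR //=; [|lin_side..]].
under eq_bigr => d _ do rewrite (big_rho _ (fun s => \sum_(r <- rho d.2) \sum_(w <- D' r.1)
   t (s.1 * w.1) (s.2 * w.2) r.2)) /=.
under eq_bigr => d _ do under eq_bigr => f _ do under eq_bigr => g _ do rewrite big_rho /=.
under eq_bigr => d _ do under eq_bigr => f _ do under eq_bigr => g _ do under eq_bigr => f' _ do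
  under eq_bigr => g' _ do [rewrite (big_copM hH') /=; [|lin_side..]].
under eq_bigr => d _ do under eq_bigr => f _ do rewrite exchange_big.
rewrite (big_coassocL hH) //=; [|lin_side..].
under eq_bigr => d _ do [rewrite (big_coassocR hH) //=; [|lin_side..]].
under eq_bigr => d _ do under eq_bigr => f _ do under eq_bigr => f' _ do under eq_bigr => g _ do
  rewrite exchange_big.
under eq_bigr => d _ do under eq_bigr => f _ do under eq_bigr => f' _ do under eq_bigr => g _ do
  [rewrite (eq_bigr (fun m => \sum_(g' <- D' f.2) \sum_(m' <- D' g'.1)
      t (S d.1 * (g.1 * m.1) * m'.1) (g.2 * m.2 * m'.2) g'.2));
   last (by move=> m _; do 2 (apply: eq_bigr => ? _); congr (t _ _ _); ring)].
under eq_bigr => d _ do under eq_bigr => f _ do under eq_bigr => f' _ do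
  [rewrite -(big_copM hH' _ _ (B := fun w => \sum_(g' <- D' f.2) \sum_(m' <- D' g'.1)
      t (S d.1 * w.1 * m'.1) (w.2 * m'.2) g'.2)); [|lin_side..]].
under eq_bigr => d _ do under eq_bigr => f _ do
  [rewrite (big_antipodeR hH _
      (g := fun y => \sum_(w <- D' y) \sum_(g' <- D' f.2) \sum_(m' <- D' g'.1)
      t (S d.1 * w.1 * m'.1) (w.2 * m'.2) g'.2)) /=; [|lin_side..];
   rewrite (big_cop1 hH' (B := fun w => \sum_(g' <- D' f.2) \sum_(m' <- D' g'.1)
      t (S d.1 * w.1 * m'.1) (w.2 * m'.2) g'.2)) /=; [|lin_side..]].
under eq_bigr => d _ do [rewrite (big_counitL hH _
    (B := fun f => \sum_(g' <- D' f.2) \sum_(m' <- D' g'.1)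
      t (S d.1 * 1 * m'.1) (1 * m'.2) g'.2)) /=; [|lin_side..]].
by do 3 (apply: eq_bigr => ? _); rewrite mulr1 mul1r.
Qed.

Lemma big_rho_cop' (W : lmodType k) z (B : A * A -> A * A -> W) :
  (forall r w, B r w = B (r.1, 0) w) -> trilinear_map (fun a b c => B (a, 0) (b, c)) ->
  \sum_(r <- rho z) \sum_(w <- D' r.2) B r w =
  \sum_(d <- D z) \sum_(s <- rho d.1) \sum_(r <- rho d.2) \sum_(m <- rho r.2)
     B (s.1 * r.1, 0) (s.2 * m.1, m.2).
Proof.
move=> hB ht; have [ht1 ht2 ht3] := trilinear_mapE ht.
rewrite (big_rho_rho_rho z ht).
transitivity (\sum_(r <- rho z) \sum_(w <- D' r.2) B (r.1, 0) (w.1, w.2)).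
  by apply: eq_bigr => r _; apply: eq_bigr => -[a b] _; rewrite hB.
rewrite (big_rho _ (fun r => \sum_(w <- D' r.2) B (r.1, 0) (w.1, w.2))) /=.
by under eq_bigr => p _ do [rewrite (big_coassocR hH') //=; [|lin_side..]].
Qed.

Lemma big_rho_phi (W : lmodType k) z (B : A * A -> A * A -> W) :
  (forall r y, B r y = B (0, r.2) y) -> trilinear_map (fun a b c => B (0, c) (a, b)) ->
  \sum_(r <- rho z) \sum_(y <- phi r.1) B r y =
  \sum_(r <- rho z) \sum_(r' <- rho (T r.1)) \sum_(m <- rho r.2) \sum_(n <- rho m.2)
     B (0, n.2) (r'.1 * m.1, r'.2 * n.1).
Proof.
move=> hB ht; set t := fun a b c => B (0, c) (a, b).
have [ht1 ht2 ht3] := trilinear_mapE ht.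
transitivity (\sum_(r <- rho z) \sum_(y <- phi r.1) t y.1 y.2 r.2).
  by apply: eq_bigr => -[a b] _; apply: eq_bigr => -[c d] _; rewrite hB.
under eq_bigr => r _ do rewrite (big_phi _ (fun y => t y.1 y.2 r.2)) /=.
rewrite /t big_rho_coassocL //=; [|lin_side..].
under eq_bigr => r _ do rewrite exchange_big.
rewrite big_rho_coassocL //=; [|lin_side..].
under eq_bigr => r _ do under eq_bigr => m _ do rewrite exchange_big.
by under eq_bigr => r _ do rewrite exchange_big.
Qed.

Lemma big_cop'_rho_phi (W : lmodType k) w (t : A -> A -> A -> W) : trilinear_map t ->
  \sum_(c <- D' w) \sum_(r <- rho c.2) \sum_(y <- phi r.1) \sum_(s <- rho c.1)
     t (y.1 * s.1) (y.2 * s.2) r.2 =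
  \sum_(d <- D w) \sum_(s <- rho d.1) \sum_(r <- rho d.2) \sum_(m <- rho r.2)
     t (s.1 * r.1) (s.2 * m.1) m.2.
Proof.
move=> ht; have [ht1 ht2 ht3] := trilinear_mapE ht.
under eq_bigr => c _ do [rewrite big_rho_phi //=; [|lin_side..]].
rewrite big_cop'_rho /=; [|lin_side..].
under eq_bigr => d _ do under eq_bigr => s0 _ do under eq_bigr => r _ do under eq_bigr => r' _ do
  under eq_bigr => m _ do under eq_bigr => n _ do [rewrite big_rhoM /=; [|lin_side..]].
under eq_bigr => d _ do [rewrite big_rho_coassocR //=; [|lin_side..]].
under eq_bigr => d _ do under eq_bigr => s0 _ do under eq_bigr => r _ do under eq_bigr => r' _ do
  under eq_bigr => m _ do under eq_bigr => n _ do rewrite exchange_big.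
under eq_bigr => d _ do under eq_bigr => s0 _ do under eq_bigr => r _ do under eq_bigr => r' _ do
  under eq_bigr => m _ do rewrite exchange_big.
under eq_bigr => d _ do under eq_bigr => s0 _ do under eq_bigr => r _ do under eq_bigr => r' _ do
  rewrite exchange_big.
under eq_bigr => d _ do under eq_bigr => s0 _ do under eq_bigr => r _ do rewrite exchange_big.
under eq_bigr => d _ do under eq_bigr => s0 _ do under eq_bigr => r _ do under eq_bigr => s' _ do
  [rewrite (eq_bigr (fun r' => \sum_(m <- rho s0.2) \sum_(n <- rho m.2) \sum_(s <- rho d.1)
      t ((s'.1 * r'.1) * (m.1 * s.1)) ((s'.2 * r'.2) * (n.1 * s.2)) n.2));
   last (by move=> r' _; do 3 (apply: eq_bigr => ? _); congr (t _ _ _); ring)].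
under eq_bigr => d _ do under eq_bigr => s0 _ do under eq_bigr => r _ do
  [rewrite -(big_rhoM _ _
      (B := fun x => \sum_(m <- rho s0.2) \sum_(n <- rho m.2) \sum_(s <- rho d.1)
      t (x.1 * (m.1 * s.1)) (x.2 * (n.1 * s.2)) n.2)); [|lin_side..]].
under eq_bigr => d _ do under eq_bigr => s0 _ do
  [rewrite (big_antipodeR hH' _
      (g := fun y => \sum_(x <- rho y) \sum_(m <- rho s0.2) \sum_(n <- rho m.2)
      \sum_(s <- rho d.1) t (x.1 * (m.1 * s.1)) (x.2 * (n.1 * s.2)) n.2)) /=; [|lin_side..];
   rewrite (big_rho1 (B := fun x => \sum_(m <- rho s0.2) \sum_(n <- rho m.2)
      \sum_(s <- rho d.1) t (x.1 * (m.1 * s.1)) (x.2 * (n.1 * s.2)) n.2)) /=; [|lin_side..]].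
under eq_bigr => d _ do
  [rewrite (big_rho_counitL _ (g := fun v => \sum_(m <- rho v) \sum_(n <- rho m.2)
      \sum_(s <- rho d.1) t (1 * (m.1 * s.1)) (1 * (n.1 * s.2)) n.2)) /=; [|lin_side..]].
under [in RHS]eq_bigr => d _ do rewrite exchange_big.
under [in RHS]eq_bigr => d _ do under eq_bigr => r _ do rewrite exchange_big.
by do 4 (apply: eq_bigr => ? _); congr (t _ _ _); ring.
Qed.

Lemma phi_coas a : teq3 (compL phi (phi a)) (compR D' (phi a)).
Proof.
move=> W t ht; have [ht1 ht2 ht3] := trilinear_mapE ht.
rewrite big_compL big_compR.
rewrite (big_phi _ (fun x => \sum_(y <- phi x.1) t y.1 y.2 x.2)) /=.
under eq_bigr => p _ do under eq_bigr => q _ do under eq_bigr => r _ do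
  [rewrite big_phiM /=; [|lin_side..]].
under eq_bigr => p _ do under eq_bigr => q _ do under eq_bigr => r _ do under eq_bigr => y _ do
  rewrite big_phi /=.
under eq_bigr => p _ do under eq_bigr => q _ do under eq_bigr => r _ do rewrite exchange_big.
under eq_bigr => p _ do under eq_bigr => q _ do rewrite exchange_big.
under eq_bigr => p _ do [rewrite (big_coassocR hH') //=; [|lin_side..]].
under eq_bigr => p _ do under eq_bigr => q _ do under eq_bigr => p2 _ do under eq_bigr => r _ do
  rewrite exchange_big.
under eq_bigr => p _ do under eq_bigr => q _ do under eq_bigr => p2 _ do rewrite exchange_big.
under eq_bigr => p _ do under eq_bigr => q _ do [rewrite (big_coassocR hH') //=; [|lin_side..]].
under eq_bigr => p _ do under eq_bigr => q _ do under eq_bigr => p2 _ do under eq_bigr => q2 _ do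
  under eq_bigr => r _ do under eq_bigr => y _ do under eq_bigr => s _ do rewrite !mulrA.
under eq_bigr => p _ do under eq_bigr => q _ do under eq_bigr => p2 _ do
  [rewrite -(big_cop_ant hH' _
      (B := fun c => \sum_(r <- rho c.2) \sum_(y <- phi r.1) \sum_(s <- rho c.1)
      t (y.1 * s.1 * p2.2) (y.2 * s.2 * q.2) (r.2 * p.2))); [|lin_side..];
   rewrite (big_cop'_rho_phi _ (t := fun u v w => t (u * p2.2) (v * q.2) (w * p.2)));
       [|lin_side..]].
rewrite [in RHS](big_phi _ (fun x => \sum_(w <- D' x.2) t x.1 w.1 w.2)) /=.
under [in RHS]eq_bigr => p _ do under eq_bigr => q _ do under eq_bigr => r _ do
  [rewrite (big_copM hH') /=; [|lin_side..]].
under [in RHS]eq_bigr => p _ do under eq_bigr => q _ do [rewrite big_rho_cop' //=; [|lin_side..]].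
under [in RHS]eq_bigr => p _ do under eq_bigr => q _ do under eq_bigr => d _ do
  under eq_bigr => s _ do under eq_bigr => r _ do rewrite exchange_big.
under [in RHS]eq_bigr => p _ do under eq_bigr => q _ do under eq_bigr => d _ do
  under eq_bigr => s _ do rewrite exchange_big.
under [in RHS]eq_bigr => p _ do under eq_bigr => q _ do under eq_bigr => d _ do
  rewrite exchange_big.
under [in RHS]eq_bigr => p _ do under eq_bigr => q _ do rewrite exchange_big.
under [in RHS]eq_bigr => p _ do rewrite exchange_big.
by rewrite [in RHS](big_coassocR hH') //=; lin_side.
Qed.

Lemma phi_right_comodule_algebra : right_comodule_algebra H' phi.
Proof.
by split; [exact: phi_tlinear | exact: phi_coas | exact: phi_counit | exact: phiM | exact: phi1].
Qed.

End HopfBrace.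

Theorem lemma2p8 (k : fieldType) (A : comAlgType k) (H H' : hopf_data A) :
  hopf_brace H H' ->
  [/\ left_comodule_algebra H' (brace_rho H H'),
      right_comodule_algebra H' (brace_phi H H')
    & forall a : A, teq2 (tmap id (ant H) (brace_rho H H' a))
                         (brace_rho H H' (ant H a))].
Proof.
move=> hb; split.
- exact: rho_left_comodule_algebra hb.
- exact: phi_right_comodule_algebra hb.
- exact: rho_ant hb.
Qed.
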